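(* For all real $t\neq 0$, \[ \frac{\pi^2+\left(4-\frac{\pi^2}{3}\right)t^2-\left(\frac43-\frac{128}{\pi^4}\right)t^4}{\pi^2+4t^2}<\frac{\tanh t}{t}<\frac{\pi^2+\left(4-\frac{\pi^2}{3}\right)t^2-\left(\frac43-\frac{2\pi^2}{15}\right)t^4+\left(\frac{8}{15}-\frac{512}{\pi^6}\right)t^6}{\pi^2+4t^2}. \] *)

From Stdlib Require Import Reals.

From Stdlib Require Import Reals Lra Psatz Machin.
From Coquelicot Require Import Coquelicot.
Open Scope R_scope.

(* tanh solves the Riccati equation y' = 1 - y^2 with y(0) = 0.  If f(0) = 0 and
   f' + f^2 < 1 on (0, t), then multiplying sinh - f cosh by exp(F) with F' = f
   gives a function with derivative cosh (1 - f' - f^2) exp(F) > 0, vanishing at 0,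
   so f(t) < tanh t; the reverse inequality is symmetric.  Both bounds are of the
   form f(t) = t * (rational function of t^2) with F elementary, and the sign of
   1 - f' - f^2 reduces to the sign of a polynomial in t^2 whose coefficients are
   polynomials in pi^2, checked from pi ~ 3.141592. *)

Lemma cosh_gt0 x : 0 < cosh x.
Proof. unfold cosh. pose proof (exp_pos x). pose proof (exp_pos (- x)). lra. Qed.

Lemma tanh_opp x : tanh (- x) = - tanh x.
Proof.
  unfold tanh, sinh, cosh. rewrite Ropp_involutive.
  pose proof (exp_pos x). pose proof (exp_pos (- x)). field. lra.
Qed.

Lemma tanh_gt0 x : 0 < x -> 0 < tanh x.
Proof.
  intros hx. apply Rdiv_lt_0_compat; [| apply cosh_gt0].
  rewrite <- sinh_0. apply sinh_lt. exact hx.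
Qed.

Section RiccatiComparison.

Variables (f df F : R -> R).
Hypothesis f_deriv : forall x, is_derive f x (df x).
Hypothesis F_deriv : forall x, is_derive F x (f x).
Hypothesis f0 : f 0 = 0.

Lemma is_derive_riccati_defect x :
  is_derive (fun y => (sinh y - f y * cosh y) * exp (F y)) x
            (cosh x * (1 - df x - f x ^ 2) * exp (F x)).
Proof.
  assert (dsinh : is_derive sinh x (cosh x))
    by (apply is_derive_Reals, derivable_pt_lim_sinh).
  assert (dcosh : is_derive cosh x (sinh x))
    by (apply is_derive_Reals, derivable_pt_lim_cosh).
  assert (dexpF : is_derive (fun y => exp (F y)) x (f x * exp (F x)))
    by (apply (is_derive_comp exp F x (exp (F x)) (f x));
        [apply is_derive_exp | apply F_deriv]).
  replace (cosh x * (1 - df x - f x ^ 2) * exp (F x))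
    with ((cosh x - (df x * cosh x + f x * sinh x)) * exp (F x)
          + (sinh x - f x * cosh x) * (f x * exp (F x))) by ring.
  apply (Derive.is_derive_mult (fun y => sinh y - f y * cosh y) (fun y => exp (F y)));
    [| exact dexpF].
  apply (is_derive_minus sinh (fun y => f y * cosh y)); [exact dsinh |].
  apply Derive.is_derive_mult; [apply f_deriv | exact dcosh].
Qed.

Lemma riccati_defect_mvt t :
  0 < t ->
  exists c, 0 < c < t /\
    (sinh t - f t * cosh t) * exp (F t) = cosh c * (1 - df c - f c ^ 2) * exp (F c) * t.
Proof.
  intros ht.
  destruct (MVT_cor2 (fun y => (sinh y - f y * cosh y) * exp (F y))
              (fun y => cosh y * (1 - df y - f y ^ 2) * exp (F y)) 0 t ht)
    as [c [Ec Hc]].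
  { intros c _. apply is_derive_Reals, is_derive_riccati_defect. }
  exists c. split; [exact Hc |].
  rewrite sinh_0, cosh_0, f0, Rminus_0_r in Ec. lra.
Qed.

Lemma riccati_subsolution_lt_tanh t :
  0 < t -> (forall x, 0 < x < t -> f x ^ 2 + df x < 1) -> f t < tanh t.
Proof.
  intros ht Hsub.
  destruct (riccati_defect_mvt t ht) as [c [Hc Ec]].
  pose proof (cosh_gt0 c). pose proof (cosh_gt0 t).
  pose proof (exp_pos (F c)). pose proof (exp_pos (F t)).
  pose proof (Hsub c Hc).
  assert (0 < cosh c * (1 - df c - f c ^ 2) * exp (F c) * t)
    by (apply Rmult_lt_0_compat; [apply Rmult_lt_0_compat; [apply Rmult_lt_0_compat |] |]; lra).
  apply Rlt_div_r; nra.
Qed.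

Lemma riccati_supersolution_gt_tanh t :
  0 < t -> (forall x, 0 < x < t -> 1 < f x ^ 2 + df x) -> tanh t < f t.
Proof.
  intros ht Hsuper.
  destruct (riccati_defect_mvt t ht) as [c [Hc Ec]].
  pose proof (cosh_gt0 c). pose proof (cosh_gt0 t).
  pose proof (exp_pos (F c)). pose proof (exp_pos (F t)).
  pose proof (Hsuper c Hc).
  assert (0 < cosh c * (f c ^ 2 + df c - 1) * exp (F c) * t)
    by (apply Rmult_lt_0_compat; [apply Rmult_lt_0_compat; [apply Rmult_lt_0_compat |] |]; lra).
  apply Rlt_div_l; nra.
Qed.

End RiccatiComparison.

Section Approximants.

Variable p : R.
Hypothesis p_gt0 : 0 < p.

Definition lower_approx t := t - t ^ 3 / 3 + 128 / p ^ 2 * t ^ 5 / (p + 4 * t ^ 2).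

Definition lower_approx_deriv t :=
  1 - t ^ 2 + 128 / p ^ 2 * (5 * p * t ^ 4 + 12 * t ^ 6) / (p + 4 * t ^ 2) ^ 2.

Definition lower_approx_prim t :=
  t ^ 2 / 2 - t ^ 4 / 12
  + 128 / p ^ 2 * (t ^ 4 / 16 - p * t ^ 2 / 32 + p ^ 2 * ln (p + 4 * t ^ 2) / 128).

Definition upper_approx t :=
  t - t ^ 3 / 3 + 2 * t ^ 5 / 15 - 512 / p ^ 3 * t ^ 7 / (p + 4 * t ^ 2).

Definition upper_approx_deriv t :=
  1 - t ^ 2 + 2 * t ^ 4 / 3
  - 512 / p ^ 3 * (7 * p * t ^ 6 + 20 * t ^ 8) / (p + 4 * t ^ 2) ^ 2.

Definition upper_approx_prim t :=
  t ^ 2 / 2 - t ^ 4 / 12 + t ^ 6 / 45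
  - 512 / p ^ 3 * (t ^ 6 / 24 - p * t ^ 4 / 64 + p ^ 2 * t ^ 2 / 128
                   - p ^ 3 * ln (p + 4 * t ^ 2) / 512).

Definition lower_defect_poly u :=
  (2/3 * p ^ 6 - 640 * p ^ 3)
  + (16/3 * p ^ 5 - 256 * p ^ 3 - 1536 * p ^ 2 - p ^ 6 / 9) * u
  + (32/3 * p ^ 4 + 256/3 * p ^ 3 - 1024 * p ^ 2 - 8/9 * p ^ 5) * u ^ 2
  - (4/3 * p ^ 2 - 128) ^ 2 * u ^ 3.

Definition upper_defect_poly u :=
  (17/45 * p ^ 8 - 3584 * p ^ 4)
  + (136/45 * p ^ 7 - 4/45 * p ^ 8 - 1024 * p ^ 4 - 10240 * p ^ 3) * u
  + (4/225 * p ^ 8 - 32/45 * p ^ 7 + 272/45 * p ^ 6 + 1024/3 * p ^ 4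
     - 4096 * p ^ 3) * u ^ 2
  + (32/225 * p ^ 7 - 64/45 * p ^ 6 - 2048/15 * p ^ 4 + 4096/3 * p ^ 3) * u ^ 3
  + (8/15 * p ^ 3 - 512) ^ 2 * u ^ 4.

Lemma denom_gt0 t : 0 < p + 4 * t ^ 2.
Proof. nra. Qed.

Lemma is_derive_lower_approx t : is_derive lower_approx t (lower_approx_deriv t).
Proof.
  pose proof (denom_gt0 t).
  unfold lower_approx, lower_approx_deriv. auto_derive; [lra |]. field; lra.
Qed.

Lemma is_derive_lower_approx_prim t :
  is_derive lower_approx_prim t (lower_approx t).
Proof.
  pose proof (denom_gt0 t).
  unfold lower_approx, lower_approx_prim. auto_derive; [lra |]. field; lra.
Qed.

Lemma is_derive_upper_approx t : is_derive upper_approx t (upper_approx_deriv t).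
Proof.
  pose proof (denom_gt0 t).
  unfold upper_approx, upper_approx_deriv. auto_derive; [lra |]. field; lra.
Qed.

Lemma is_derive_upper_approx_prim t :
  is_derive upper_approx_prim t (upper_approx t).
Proof.
  pose proof (denom_gt0 t).
  unfold upper_approx, upper_approx_prim. auto_derive; [lra |]. field; lra.
Qed.

Lemma lower_approx_defect t :
  (1 - lower_approx_deriv t - lower_approx t ^ 2) * (p + 4 * t ^ 2) ^ 2 * p ^ 4
  = t ^ 4 * lower_defect_poly (t ^ 2).
Proof.
  pose proof (denom_gt0 t).
  unfold lower_approx, lower_approx_deriv, lower_defect_poly. field; lra.
Qed.

Lemma upper_approx_defect t :
  (upper_approx_deriv t + upper_approx t ^ 2 - 1) * (p + 4 * t ^ 2) ^ 2 * p ^ 6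
  = t ^ 6 * upper_defect_poly (t ^ 2).
Proof.
  pose proof (denom_gt0 t).
  unfold upper_approx, upper_approx_deriv, upper_defect_poly. field; lra.
Qed.

Lemma lower_approx_eq t :
  lower_approx t
  = t * ((p + (4 - p / 3) * t ^ 2 - (4 / 3 - 128 / p ^ 2) * t ^ 4) / (p + 4 * t ^ 2)).
Proof. pose proof (denom_gt0 t). unfold lower_approx. field; lra. Qed.

Lemma upper_approx_eq t :
  upper_approx t
  = t * ((p + (4 - p / 3) * t ^ 2 - (4 / 3 - 2 * p / 15) * t ^ 4
          + (8 / 15 - 512 / p ^ 3) * t ^ 6) / (p + 4 * t ^ 2)).
Proof. pose proof (denom_gt0 t). unfold upper_approx. field; lra. Qed.

Lemma lower_approx_opp t : lower_approx (- t) = - lower_approx t.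
Proof.
  pose proof (denom_gt0 t). pose proof (denom_gt0 (- t)).
  unfold lower_approx. field. lra.
Qed.

Lemma upper_approx_opp t : upper_approx (- t) = - upper_approx t.
Proof.
  pose proof (denom_gt0 t). pose proof (denom_gt0 (- t)).
  unfold upper_approx. field. lra.
Qed.

End Approximants.

Lemma cubic_pos_le_64 a0 a1 a2 r u :
  0 < a0 -> 0 <= a1 -> 64 * r ^ 2 <= a2 -> 0 < u <= 64 ->
  0 < a0 + a1 * u + a2 * u ^ 2 - r ^ 2 * u ^ 3.
Proof.
  intros h0 h1 h2 hu.
  assert (r ^ 2 * u <= 64 * r ^ 2) by nra.
  replace (r ^ 2 * u ^ 3) with (r ^ 2 * u * u ^ 2) by ring.
  nra.
Qed.

Lemma quartic_pos a0 a1 a2 a3 b u :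
  0 < a0 -> 0 <= a1 -> 0 < b -> a3 ^ 2 < 4 * a2 * b -> 0 < u ->
  0 < a0 + a1 * u + a2 * u ^ 2 + a3 * u ^ 3 + b * u ^ 4.
Proof.
  intros h0 h1 hb hdisc hu.
  assert (hq : 0 < a2 + a3 * u + b * u ^ 2).
  { assert (0 < 4 * b * (a2 + a3 * u + b * u ^ 2)).
    { replace (4 * b * (a2 + a3 * u + b * u ^ 2))
        with ((2 * b * u + a3) ^ 2 + (4 * a2 * b - a3 ^ 2)) by ring.
      pose proof (pow2_ge_0 (2 * b * u + a3)). lra. }
    nra. }
  replace (a0 + a1 * u + a2 * u ^ 2 + a3 * u ^ 3 + b * u ^ 4)
    with (a0 + a1 * u + u ^ 2 * (a2 + a3 * u + b * u ^ 2)) by ring.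
  nra.
Qed.

Lemma PI_bounds : 3141592 / 1000000 < PI < 3141593 / 1000000.
Proof.
  pose proof (PI_2_3_7_ineq 3) as [lo hi].
  unfold sum_f_R0, tg_alt, PI_2_3_7_tg, Ratan_seq in lo, hi. simpl in lo, hi.
  lra.
Qed.

Lemma PI2_gt0 : 0 < PI ^ 2.
Proof. apply pow_lt, PI_RGT_0. Qed.

Lemma PI2_pow_bounds k :
  (3141592 / 1000000) ^ (2 * k) <= (PI ^ 2) ^ k <= (3141593 / 1000000) ^ (2 * k).
Proof.
  pose proof PI_bounds. rewrite <- pow_mult. split; apply pow_incr; lra.
Qed.

Lemma lower_defect_poly_pos u : 0 < u <= 64 -> 0 < lower_defect_poly (PI ^ 2) u.
Proof.
  intros hu. unfold lower_defect_poly.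
  pose proof (PI2_pow_bounds 2) as b2. pose proof (PI2_pow_bounds 3) as b3.
  pose proof (PI2_pow_bounds 4) as b4. pose proof (PI2_pow_bounds 5) as b5.
  pose proof (PI2_pow_bounds 6) as b6. set (p := PI ^ 2) in *. simpl Nat.mul in *.
  apply cubic_pos_le_64; [lra | lra | | exact hu].
  assert (1878 / 1000 <= 4/3 * p ^ 2 - 128 <= 1879 / 1000) by lra.
  assert (259 <= 32/3 * p ^ 4 + 256/3 * p ^ 3 - 1024 * p ^ 2 - 8/9 * p ^ 5) by lra.
  clear b2 b3 b4 b5 b6. nra.
Qed.

Lemma upper_defect_poly_pos u : 0 < u -> 0 < upper_defect_poly (PI ^ 2) u.
Proof.
  intros hu. unfold upper_defect_poly.
  pose proof (PI2_pow_bounds 3) as b3. pose proof (PI2_pow_bounds 4) as b4.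
  pose proof (PI2_pow_bounds 6) as b6. pose proof (PI2_pow_bounds 7) as b7.
  pose proof (PI2_pow_bounds 8) as b8. set (p := PI ^ 2) in *. simpl Nat.mul in *.
  apply quartic_pos; [lra | lra | | | exact hu].
  - assert (74 / 100 <= 8/15 * p ^ 3 - 512) by lra.
    clear b3 b4 b6 b7 b8. nra.
  - assert (hs : 74 / 100 <= 8/15 * p ^ 3 - 512) by lra.
    assert (ha3 : -34 <= 32/225 * p ^ 7 - 64/45 * p ^ 6 - 2048/15 * p ^ 4
                         + 4096/3 * p ^ 3 <= 0) by lra.
    assert (ha2 : 1253 <= 4/225 * p ^ 8 - 32/45 * p ^ 7 + 272/45 * p ^ 6
                          + 1024/3 * p ^ 4 - 4096 * p ^ 3) by lra.
    set (s := 8/15 * p ^ 3 - 512) in *.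
    set (a3 := 32/225 * p ^ 7 - 64/45 * p ^ 6 - 2048/15 * p ^ 4 + 4096/3 * p ^ 3) in *.
    set (a2 := 4/225 * p ^ 8 - 32/45 * p ^ 7 + 272/45 * p ^ 6 + 1024/3 * p ^ 4
               - 4096 * p ^ 3) in *.
    clearbody s a3 a2. clear b3 b4 b6 b7 b8.
    assert (a3 ^ 2 <= 34 * 34) by nra.
    assert (74 / 100 * (74 / 100) <= s ^ 2) by nra.
    nra.
Qed.

(* Beyond t = 8 the Riccati defect of the lower approximant changes sign, but the
   approximant is then already negative. *)
Lemma lower_approx_neg t : 8 <= t -> lower_approx (PI ^ 2) t < 0.
Proof.
  intros ht. rewrite (lower_approx_eq _ PI2_gt0).
  pose proof (denom_gt0 _ PI2_gt0 t).
  pose proof (PI2_pow_bounds 1). pose proof (PI2_pow_bounds 2).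
  set (p := PI ^ 2) in *. simpl Nat.mul in *.
  assert (128 / p ^ 2 <= 13148 / 10000) by (apply Rle_div_l; lra).
  assert (hu : 64 <= t ^ 2) by nra.
  assert (p + (4 - p / 3) * t ^ 2 - (4 / 3 - 128 / p ^ 2) * t ^ 4 < 0) by nra.
  assert ((p + (4 - p / 3) * t ^ 2 - (4 / 3 - 128 / p ^ 2) * t ^ 4)
          / (p + 4 * t ^ 2) < 0) by (apply Rlt_div_l; lra).
  nra.
Qed.

Lemma lower_approx_riccati t :
  0 < t <= 8 -> lower_approx (PI ^ 2) t ^ 2 + lower_approx_deriv (PI ^ 2) t < 1.
Proof.
  intros ht.
  pose proof (lower_approx_defect _ PI2_gt0 t) as E.
  pose proof (denom_gt0 _ PI2_gt0 t).
  assert (0 < t ^ 4 * lower_defect_poly (PI ^ 2) (t ^ 2)).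
  { apply Rmult_lt_0_compat; [apply pow_lt; lra |].
    apply lower_defect_poly_pos. split; nra. }
  assert (0 < (PI ^ 2 + 4 * t ^ 2) ^ 2 * (PI ^ 2) ^ 4)
    by (apply Rmult_lt_0_compat; apply pow_lt; [lra | apply PI2_gt0]).
  rewrite <- E, Rmult_assoc in *. nra.
Qed.

Lemma upper_approx_riccati t :
  0 < t -> 1 < upper_approx (PI ^ 2) t ^ 2 + upper_approx_deriv (PI ^ 2) t.
Proof.
  intros ht.
  pose proof (upper_approx_defect _ PI2_gt0 t) as E.
  pose proof (denom_gt0 _ PI2_gt0 t).
  assert (0 < t ^ 6 * upper_defect_poly (PI ^ 2) (t ^ 2)).
  { apply Rmult_lt_0_compat; [apply pow_lt; lra |].
    apply upper_defect_poly_pos. nra. }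
  assert (0 < (PI ^ 2 + 4 * t ^ 2) ^ 2 * (PI ^ 2) ^ 6)
    by (apply Rmult_lt_0_compat; apply pow_lt; [lra | apply PI2_gt0]).
  rewrite <- E, Rmult_assoc in *. nra.
Qed.

Lemma lower_approx_lt_tanh t : 0 < t -> lower_approx (PI ^ 2) t < tanh t.
Proof.
  intros ht. destruct (Rle_lt_dec t 8) as [h8 | h8].
  - apply (riccati_subsolution_lt_tanh _ (lower_approx_deriv (PI ^ 2))
             (lower_approx_prim (PI ^ 2))); [| | | exact ht |].
    + apply is_derive_lower_approx, PI2_gt0.
    + apply is_derive_lower_approx_prim, PI2_gt0.
    + unfold lower_approx, Rdiv. ring.
    + intros x hx. apply lower_approx_riccati. lra.
  - pose proof (lower_approx_neg t (Rlt_le _ _ h8)). pose proof (tanh_gt0 t ht). lra.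
Qed.

Lemma tanh_lt_upper_approx t : 0 < t -> tanh t < upper_approx (PI ^ 2) t.
Proof.
  intros ht.
  apply (riccati_supersolution_gt_tanh _ (upper_approx_deriv (PI ^ 2))
           (upper_approx_prim (PI ^ 2))); [| | | exact ht |].
  - apply is_derive_upper_approx, PI2_gt0.
  - apply is_derive_upper_approx_prim, PI2_gt0.
  - unfold upper_approx, Rdiv. ring.
  - intros x hx. apply upper_approx_riccati. lra.
Qed.

Lemma odd_div_opp (f : R -> R) :
  (forall y, f (- y) = - f y) -> forall x, f (- x) / - x = f x / x.
Proof. intros Hodd x. rewrite Hodd. unfold Rdiv. rewrite Rinv_opp. ring. Qed.

Lemma tanh_div_bounds_pos t :
  0 < t -> lower_approx (PI ^ 2) t / t < tanh t / t < upper_approx (PI ^ 2) t / t.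
Proof.
  intros ht.
  pose proof (lower_approx_lt_tanh t ht). pose proof (tanh_lt_upper_approx t ht).
  pose proof (Rinv_0_lt_compat t ht).
  split; apply Rmult_lt_compat_r; assumption.
Qed.

Lemma tanh_div_bounds t :
  t <> 0 -> lower_approx (PI ^ 2) t / t < tanh t / t < upper_approx (PI ^ 2) t / t.
Proof.
  intros ht. destruct (Rlt_or_le 0 t) as [hpos | hneg].
  - exact (tanh_div_bounds_pos t hpos).
  - rewrite <- (Ropp_involutive t), (odd_div_opp tanh tanh_opp),
      (odd_div_opp _ (lower_approx_opp _ PI2_gt0)),
      (odd_div_opp _ (upper_approx_opp _ PI2_gt0)).
    apply tanh_div_bounds_pos. lra.
Qed.

Theorem mainTheorem16 (t : R) (ht : t <> 0) :
  (PI ^ 2 + (4 - PI ^ 2 / 3) * t ^ 2 - (4 / 3 - 128 / PI ^ 4) * t ^ 4)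
      / (PI ^ 2 + 4 * t ^ 2)
  < tanh t / t /\
  tanh t / t <
  (PI ^ 2 + (4 - PI ^ 2 / 3) * t ^ 2 - (4 / 3 - 2 * PI ^ 2 / 15) * t ^ 4
     + (8 / 15 - 512 / PI ^ 6) * t ^ 6)
      / (PI ^ 2 + 4 * t ^ 2).
Proof.
  pose proof (tanh_div_bounds t ht) as B.
  rewrite (lower_approx_eq _ PI2_gt0), (upper_approx_eq _ PI2_gt0),
    !(Rmult_div_r t) in B by exact ht.
  replace (PI ^ 4) with ((PI ^ 2) ^ 2) by ring.
  replace (PI ^ 6) with ((PI ^ 2) ^ 3) by ring.
  exact B.
Qed.
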